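(* Assume $\sigma_1(x)=\tfrac12\sigma_1''(0)\,x(x-a_1)$ and $\sigma_2(x)=\tfrac12\sigma_2''(0)\,x(x-a_2)$ with $\sigma_1''(0)\ne0$, $\sigma_2''(0)\ne0$ and real $0<a_1<a_2$. Let $\Lambda_q=q^{-2}\Big[1+\frac{(1-q^{-1})\tau'(0)}{\frac12\sigma_1''(0)}\Big]$ and $y_0=q^{-1}\Big[1-\frac{(1-q^{-1})}{a_1}\frac{\tau(0)}{\frac12\sigma_1''(0)}\Big]$, and assume $0<qy_0<1$ and $0<q^2\Lambda_q<1$. Put $b=a_1$ and $$\rho(x)=|x|^{\alpha}\frac{(qx/b;q)_\infty}{(x/a_2;q)_\infty},\qquad q^{\alpha}=\frac{q^{-2}\sigma_2''(0)a_2}{\sigma_1''(0)b}.$$ Then there exist polynomials $P_n$, $n\in\mathbb{N}_0$, with $P_n$ of degree $n$ a solution of the q-EHT with $\lambda=\lambda_n$, and nonzero constants $d_n^2$, such that for all $m,n\in\mathbb{N}_0$ $$\int_0^{b}P_n(x)P_m(x)\rho(x)\,d_qx=d_n^2\delta_{mn},$$ i.e. orthogonality with respect to $\rho$ supported on $\{q^kb\}_{k\in\mathbb{N}_0}$.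
   Context: Throughout $0<q<1$. For a function $y$ and $\zeta\in\{q,q^{-1}\}$, $D_\zeta y(x)=\frac{y(x)-y(\zeta x)}{(1-\zeta)x}$ for $x\ne0$ and $D_\zeta y(0)=y'(0)$; $[n]_q=\frac{1-q^n}{1-q}$. Let $\sigma_1$ be a real polynomial of degree at most two, $\tau(x)=\tau'(0)x+\tau(0)$ a real polynomial with $\tau'(0)\ne0$, and $\sigma_2(x):=q[\sigma_1(x)+(1-q^{-1})x\tau(x)]$. The q-EHT with parameter $n$ is $\sigma_1(x)D_{q^{-1}}D_qy(x)+\tau(x)D_qy(x)+\lambda_ny(x)=0$, $\lambda_n=-[n]_q\big(\tau'(0)+\tfrac12[n-1]_{q^{-1}}\sigma_1''(0)\big)$. $(\beta;q)_\infty=\prod_{k\ge0}(1-\beta q^k)$. For $q^\alpha=c$ ($c\ne0$), $\alpha$ is any complex number with $e^{\alpha\ln q}=c$ and $|x|^\alpha:=e^{\alpha\ln|x|}$. For $b>0$, $\int_0^b f(x)\,d_qx=(1-q)b\sum_{j\ge0}q^jf(q^jb)$. *)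

From Stdlib Require Import Reals.
From Coquelicot Require Import Coquelicot.
Open Scope R_scope.

Definition Dz (zeta : R) (y : R -> R) (x : R) : R :=
  if Req_EM_T x 0 then Derive y 0 else (y x - y (zeta * x)) / ((1 - zeta) * x).

Definition qnum (q : R) (n : nat) : R := (1 - q ^ n) / (1 - q).

(* lambda_n = -[n]_q (tau'(0) + 1/2 [n-1]_{q^{-1}} sigma1''(0)).
   For n = 0 the factor [0]_q = 0 makes lambda_0 = 0 (truncated n-1 is harmless). *)
Definition lambda_n (q t1 s1 : R) (n : nat) : R :=
  - qnum q n * (t1 + / 2 * qnum (/ q) (n - 1) * s1).

Definition qEHT (q : R) (sigma1 tau : R -> R) (lam : R) (y : R -> R) (x : R) : Prop :=
  sigma1 x * Dz (/ q) (Dz q y) x + tau x * Dz q y x + lam * y x = 0.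

Fixpoint qpoch_n (beta q : R) (n : nat) : R :=
  match n with
  | O => 1
  | S k => qpoch_n beta q k * (1 - beta * q ^ k)
  end.
Definition qpoch_inf (beta q : R) : R := real (Lim_seq (qpoch_n beta q)).

Definition cexp (z : C) : C :=
  (exp (fst z) * cos (snd z), exp (fst z) * sin (snd z)).

Definition cabspow (x : R) (alpha : C) : C := cexp (Cmult alpha (RtoC (ln (Rabs x)))).

Definition rho (q b a2 : R) (alpha : C) (x : R) : C :=
  Cmult (cabspow x alpha) (RtoC (qpoch_inf (q * x / b) q / qpoch_inf (x / a2) q)).

(* "int_0^b f(x) d_qx = I" : the defining series
   (1-q) b sum_{j>=0} q^j f(q^j b) converges (in C) to I. *)
Definition is_qint (q b : R) (f : R -> C) (I : C) : Prop :=
  is_series (fun j : nat => Cmult (RtoC ((1 - q) * b * q ^ j)) (f (q ^ j * b))) I.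

Definition peval (c : nat -> R) (n : nat) (x : R) : R :=
  sum_f_R0 (fun k => c k * x ^ k) n.

From Stdlib Require Import Reals Lra Lia Classical.
From Coquelicot Require Import Coquelicot.
Open Scope R_scope.

(* The operator of the q-EHT maps x^k to -λ_k x^k + μ_k x^(k-1), and 0 < q^2 Λ_q < 1 makes
   the λ_k pairwise distinct, so a triangular recursion yields for every n an eigenpolynomial
   P_n of degree n.  On the lattice x_j = q^j b the q-integral against ρ is, up to the factor
   (1-q) b |b|^α, the series Σ_j w_j f(x_j) with w_j = r^j (q^(j+1);q)_∞ / (q^j b/a2;q)_∞ and
   r = q y0.  These weights satisfy the discrete Pearson equation
   w_(j+1) σ1(x_(j+1)) / x_(j+1) = w_j σ2(x_j) / (q x_j), so summation by parts turns
   (λ_m - λ_n) Σ_(j≤N) w_j P_n(x_j) P_m(x_j) into a boundary term w_N × (bounded), which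
   tends to 0 because 0 < r < 1.  The norms are positive because a nonzero polynomial cannot
   vanish on the whole sequence q^j b. *)

Lemma pow_le_one (q : R) (n : nat) : 0 <= q <= 1 -> q ^ n <= 1.
Proof. intros hq. rewrite <- (pow1 n). apply pow_incr. exact hq. Qed.

Lemma pow_lt_pow_of_lt (q : R) (k n : nat) : 0 < q < 1 -> (k < n)%nat -> q ^ n < q ^ k.
Proof.
  intros hq hkn. replace n with (k + (n - k))%nat by lia. rewrite pow_add.
  assert (0 < q ^ k) by (apply pow_lt; lra).
  destruct (pow_lt_1_compat q (n - k) ltac:(lra) ltac:(lia)).
  nra.
Qed.

Lemma qnum_S_neq_0 (q : R) (k : nat) : 0 < q < 1 -> qnum q (S k) <> 0.
Proof.
  intros hq. unfold qnum.
  destruct (pow_lt_1_compat q (S k) ltac:(lra) ltac:(lia)).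
  apply Rmult_integral_contrapositive. split; [lra | apply Rinv_neq_0_compat; lra].
Qed.

(** * Polynomials *)

Definition qdiff_coef (z : R) (c : nat -> R) (k : nat) : R := qnum z (S k) * c (S k).

Lemma peval_S (c : nat -> R) (n : nat) (x : R) :
  peval c (S n) x = peval c n x + c (S n) * x ^ S n.
Proof. reflexivity. Qed.

Lemma peval_S_top_0 (c : nat -> R) (n : nat) (x : R) :
  c (S n) = 0 -> peval c (S n) x = peval c n x.
Proof. intros h. rewrite peval_S, h. ring. Qed.

Lemma peval_at_0 (c : nat -> R) (n : nat) : peval c n 0 = c 0%nat.
Proof.
  induction n as [|n IH]; [unfold peval; simpl; ring|].
  rewrite peval_S, IH. simpl. ring.
Qed.

Lemma peval_qdiff_S (z : R) (c : nat -> R) (n : nat) (x : R) : z <> 1 ->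
  peval c (S n) x - peval c (S n) (z * x) = (1 - z) * x * peval (qdiff_coef z c) n x.
Proof.
  intros hz. assert (1 - z <> 0) by lra.
  induction n as [|n IH].
  - unfold peval, qdiff_coef, qnum. simpl. field. assumption.
  - rewrite (peval_S c (S n) x), (peval_S c (S n) (z * x)), (peval_S (qdiff_coef z c) n x), Rpow_mult_distr.
    replace (peval c (S n) x + c (S (S n)) * x ^ S (S n) -
       (peval c (S n) (z * x) + c (S (S n)) * (z ^ S (S n) * x ^ S (S n))))
     with (peval c (S n) x - peval c (S n) (z * x) + c (S (S n)) * (1 - z ^ S (S n)) * x ^ S (S n))
     by ring.
    rewrite IH. unfold qdiff_coef, qnum. simpl. field. assumption.
Qed.

Lemma peval_qdiff (z : R) (c : nat -> R) (n : nat) (x : R) : z <> 1 -> c (S n) = 0 ->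
  peval c n x - peval c n (z * x) = (1 - z) * x * peval (qdiff_coef z c) n x.
Proof.
  intros hz hc. rewrite <- !(peval_S_top_0 c n) by exact hc. apply peval_qdiff_S, hz.
Qed.

Lemma ex_derive_peval (c : nat -> R) (n : nat) (x : R) : ex_derive (peval c n) x.
Proof.
  revert x. induction n as [|n IH]; intros x.
  - unfold peval. simpl. auto_derive. trivial.
  - apply (ex_derive_plus (peval c n) (fun t => c (S n) * t ^ S n)); [apply IH|].
    auto_derive. trivial.
Qed.

Lemma continuity_pt_peval (c : nat -> R) (n : nat) (x : R) : continuity_pt (peval c n) x.
Proof. apply continuity_pt_filterlim, (ex_derive_continuous (peval c n)), ex_derive_peval. Qed.

Lemma is_derive_peval_0 (c : nat -> R) (n : nat) : c (S n) = 0 ->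
  is_derive (peval c n) 0 (c 1%nat).
Proof.
  intros hc. apply (is_derive_ext (peval c (S n))); [intros t; apply peval_S_top_0, hc|].
  clear hc. induction n as [|n IH].
  - unfold peval. simpl. auto_derive; [trivial | ring].
  - replace (c 1%nat) with (c 1%nat + 0) by ring.
    apply (is_derive_plus (peval c (S n)) (fun t => c (S (S n)) * t ^ S (S n))); [exact IH|].
    auto_derive; [trivial | simpl; ring].
Qed.

Lemma peval_const (c : nat -> R) (n : nat) (x : R) :
  (forall k, (1 <= k <= n)%nat -> c k = 0) -> peval c n x = c 0%nat.
Proof.
  induction n as [|n IH]; intros h; [unfold peval; simpl; ring|].
  rewrite peval_S, IH, (h (S n)); [ring | lia | intros k hk; apply h; lia].
Qed.

(* The q-difference quotient lowers the degree, so vanishing on the whole sequence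
   q^j a forces every coefficient to vanish. *)
Lemma peval_geom_zero (q a : R) (n : nat) (c : nat -> R) : 0 < q < 1 -> 0 < a ->
  (forall j, peval c n (q ^ j * a) = 0) -> forall k, (k <= n)%nat -> c k = 0.
Proof.
  intros hq ha. revert c. induction n as [|n IH]; intros c h k hk.
  - specialize (h 0%nat). unfold peval in h. simpl in h. replace k with 0%nat by lia. lra.
  - assert (hd : forall j, peval (qdiff_coef q c) n (q ^ j * a) = 0).
    { intros j. pose proof (peval_qdiff_S q c n (q ^ j * a) ltac:(lra)) as E.
      replace (q * (q ^ j * a)) with (q ^ S j * a) in E by (simpl; ring).
      rewrite (h j), (h (S j)) in E.
      assert (0 < q ^ j) by (apply pow_lt; lra).
      apply (Rmult_eq_reg_l ((1 - q) * (q ^ j * a))); [rewrite <- E; ring |].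
      apply Rmult_integral_contrapositive; split; [lra | nra]. }
    assert (hS : forall k, (1 <= k <= S n)%nat -> c k = 0).
    { intros [|k'] hk'; [lia|].
      pose proof (IH (qdiff_coef q c) hd k' ltac:(lia)) as E. unfold qdiff_coef in E.
      apply Rmult_integral in E. destruct E as [E | E]; [|exact E].
      destruct (qnum_S_neq_0 q k' hq E). }
    destruct k as [|k]; [|apply hS; lia].
    specialize (h 0%nat). rewrite peval_const in h; assumption.
Qed.

(** * The q-Pochhammer symbol and the lattice weight *)

Lemma qpoch_n_S_shift (b q : R) (n : nat) :
  qpoch_n b q (S n) = (1 - b) * qpoch_n (b * q) q n.
Proof.
  induction n as [|n IH]; [simpl; ring|].
  change (qpoch_n b q (S (S n))) with (qpoch_n b q (S n) * (1 - b * q ^ S n)).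
  rewrite IH. simpl. ring.
Qed.

Lemma exp_le_exp (x y : R) : x <= y -> exp x <= exp y.
Proof. intros [h | ->]; [left; apply exp_increasing, h | right; reflexivity]. Qed.

Lemma exp_neg_le_one_sub (x b : R) : 0 <= x <= b -> b < 1 -> exp (- (x / (1 - b))) <= 1 - x.
Proof.
  intros hx hb.
  apply Rle_trans with (exp (- (x / (1 - x)))).
  { apply exp_le_exp, Ropp_le_contravar. unfold Rdiv.
    apply Rmult_le_compat_l; [lra|]. apply Rinv_le_contravar; lra. }
  rewrite exp_Ropp.
  assert (0 <= x / (1 - x)) by (apply Rdiv_le_0_compat; lra).
  apply Rle_trans with (/ (1 + x / (1 - x))).
  - apply Rinv_le_contravar; [lra | apply exp_ineq1_le].
  - right. field. lra.
Qed.

Lemma qpoch_n_bounds (b q : R) (n : nat) : 0 <= b < 1 -> 0 < q < 1 ->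
  exp (- (b * (1 - q ^ n) / ((1 - b) * (1 - q)))) <= qpoch_n b q n <= 1.
Proof.
  intros hb hq. induction n as [|n IH].
  - simpl. replace (- (b * (1 - 1) / ((1 - b) * (1 - q)))) with 0 by (field; lra).
    rewrite exp_0. lra.
  - simpl qpoch_n.
    assert (0 <= q ^ n <= 1) by (split; [apply pow_le; lra | apply pow_le_one; lra]).
    assert (hf : exp (- (b * q ^ n / (1 - b))) <= 1 - b * q ^ n)
      by (apply exp_neg_le_one_sub; nra).
    assert (0 <= qpoch_n b q n) by (apply Rle_trans with (2 := proj1 IH); left; apply exp_pos).
    assert (0 <= b * q ^ n <= b) by (split; nra).
    split; [|nra].
    replace (- (b * (1 - q ^ S n) / ((1 - b) * (1 - q))))
      with (- (b * (1 - q ^ n) / ((1 - b) * (1 - q))) + - (b * q ^ n / (1 - b)))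
      by (simpl; field; lra).
    rewrite exp_plus. apply Rmult_le_compat; [left; apply exp_pos | left; apply exp_pos | tauto | exact hf].
Qed.

Lemma qpoch_inf_spec (b q : R) : 0 <= b < 1 -> 0 < q < 1 ->
  is_lim_seq (qpoch_n b q) (qpoch_inf b q) /\ 0 < qpoch_inf b q <= 1.
Proof.
  intros hb hq.
  set (L := exp (- (b / ((1 - b) * (1 - q))))).
  assert (hlow : forall n, L <= qpoch_n b q n).
  { intros n. apply Rle_trans with (2 := proj1 (qpoch_n_bounds b q n hb hq)).
    apply exp_le_exp, Ropp_le_contravar. unfold Rdiv.
    assert (0 < q ^ n) by (apply pow_lt; lra).
    assert (0 < / ((1 - b) * (1 - q))) by (apply Rinv_0_lt_compat; nra).
    apply Rmult_le_compat_r; nra. }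
  assert (hup : forall n, qpoch_n b q n <= 1) by (intros n; apply (qpoch_n_bounds b q n hb hq)).
  assert (hdec : forall n, qpoch_n b q (S n) <= qpoch_n b q n).
  { intros n. simpl. assert (0 < L) by apply exp_pos.
    assert (0 <= b * q ^ n) by (apply Rmult_le_pos; [lra | apply pow_le; lra]).
    specialize (hlow n). nra. }
  pose proof (Lim_seq_correct _ (ex_lim_seq_decr _ hdec)) as hlim.
  assert (h1 : Rbar_le L (Lim_seq (qpoch_n b q))).
  { apply (is_lim_seq_le (fun _ => L) (qpoch_n b q)); [exact hlow | apply is_lim_seq_const | exact hlim]. }
  assert (h2 : Rbar_le (Lim_seq (qpoch_n b q)) 1).
  { apply (is_lim_seq_le (qpoch_n b q) (fun _ => 1)); [exact hup | exact hlim | apply is_lim_seq_const]. }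
  unfold qpoch_inf.
  destruct (Lim_seq (qpoch_n b q)) as [l | |]; simpl in *; try contradiction.
  assert (0 < L) by apply exp_pos.
  split; [exact hlim | lra].
Qed.

Lemma qpoch_inf_shift (b q : R) : 0 <= b < 1 -> 0 < q < 1 ->
  qpoch_inf b q = (1 - b) * qpoch_inf (b * q) q.
Proof.
  intros hb hq.
  destruct (qpoch_inf_spec b q hb hq) as [h1 _].
  destruct (qpoch_inf_spec (b * q) q ltac:(nra) hq) as [h2 _].
  apply is_lim_seq_incr_1 in h1.
  apply (is_lim_seq_scal_l _ (1 - b)) in h2.
  apply is_lim_seq_unique in h1. apply is_lim_seq_unique in h2. simpl in h2.
  apply Rbar_finite_eq. rewrite <- h1, <- h2.
  apply Lim_seq_ext. intros n. apply qpoch_n_S_shift.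
Qed.

(* With g = b/a2 and r = q^(1+α), the q-integral of f ρ over [0, b] is
   (1-q) b |b|^α Σ_j qweight q r g j f(q^j b). *)
Definition qweight (q r g : R) (j : nat) : R :=
  r ^ j * (qpoch_inf (q ^ S j) q / qpoch_inf (q ^ j * g) q).

Section Weight.
Variables (q r g : R).
Hypotheses (hq : 0 < q < 1) (hr : 0 < r) (hg : 0 <= g < 1).

Lemma qpoch_inf_le_geom (j : nat) : qpoch_inf g q <= qpoch_inf (q ^ j * g) q.
Proof.
  induction j as [|j IH]; [simpl; rewrite Rmult_1_l; lra|].
  assert (0 < q ^ j <= 1) by (split; [apply pow_lt | apply pow_le_one]; lra).
  assert (0 <= q ^ j * g <= g) by (split; nra).
  rewrite (qpoch_inf_shift (q ^ j * g) q) in IH by lra.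
  destruct (qpoch_inf_spec (q ^ j * g * q) q ltac:(split; nra) hq) as [_ hpos].
  replace (q ^ S j * g) with (q ^ j * g * q) by (simpl; ring).
  nra.
Qed.

Lemma qweight_pos (j : nat) : 0 < qweight q r g j.
Proof.
  assert (0 < q ^ j <= 1) by (split; [apply pow_lt | apply pow_le_one]; lra).
  destruct (qpoch_inf_spec (q ^ S j) q ltac:(simpl; split; nra) hq) as [_ hN].
  destruct (qpoch_inf_spec (q ^ j * g) q ltac:(split; nra) hq) as [_ hD].
  unfold qweight. apply Rmult_lt_0_compat; [apply pow_lt; lra | apply Rdiv_lt_0_compat; lra].
Qed.

Lemma qweight_le (j : nat) : qweight q r g j <= r ^ j / qpoch_inf g q.
Proof.
  assert (0 < q ^ j <= 1) by (split; [apply pow_lt | apply pow_le_one]; lra).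
  destruct (qpoch_inf_spec (q ^ S j) q ltac:(simpl; split; nra) hq) as [_ hN].
  destruct (qpoch_inf_spec g q hg hq) as [_ hD].
  pose proof (qpoch_inf_le_geom j).
  assert (0 < r ^ j) by (apply pow_lt; lra).
  unfold qweight, Rdiv. apply Rmult_le_compat_l; [lra|].
  apply Rle_trans with (/ qpoch_inf (q ^ j * g) q).
  - rewrite <- (Rmult_1_l (/ qpoch_inf (q ^ j * g) q)) at 2.
    apply Rmult_le_compat_r; [left; apply Rinv_0_lt_compat |]; lra.
  - apply Rinv_le_contravar; lra.
Qed.

Lemma qweight_succ (j : nat) :
  qweight q r g (S j) * (1 - q ^ S j) = r * (1 - q ^ j * g) * qweight q r g j.
Proof.
  assert (0 < q ^ j <= 1) by (split; [apply pow_lt | apply pow_le_one]; lra).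
  assert (hN : qpoch_inf (q ^ S j) q = (1 - q ^ S j) * qpoch_inf (q ^ S (S j)) q).
  { rewrite qpoch_inf_shift by (simpl; split; nra).
    replace (q ^ S j * q) with (q ^ S (S j)) by (simpl; ring). reflexivity. }
  assert (hD : qpoch_inf (q ^ j * g) q = (1 - q ^ j * g) * qpoch_inf (q ^ S j * g) q).
  { rewrite qpoch_inf_shift by (split; nra).
    replace (q ^ j * g * q) with (q ^ S j * g) by (simpl; ring). reflexivity. }
  assert (0 <= q ^ j * g <= g) by (split; nra).
  assert (0 <= q ^ S j * g < 1) by (simpl; split; nra).
  destruct (qpoch_inf_spec (q ^ S j * g) q ltac:(lra) hq) as [_ hpos].
  assert (1 - q ^ j * g <> 0) by lra.
  unfold qweight. rewrite hN, hD. change (r ^ S j) with (r * r ^ j). field. lra.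
Qed.

Lemma is_lim_seq_qweight : r < 1 -> is_lim_seq (qweight q r g) 0.
Proof.
  intros hr1.
  destruct (qpoch_inf_spec g q hg hq) as [_ hD].
  apply is_lim_seq_le_le with (u := fun _ => 0) (w := fun j => r ^ j / qpoch_inf g q).
  - intros j. split; [left; apply qweight_pos | apply qweight_le].
  - apply is_lim_seq_const.
  - replace (Finite 0) with (Rbar_mult 0 (/ qpoch_inf g q)) by (simpl; f_equal; ring).
    apply is_lim_seq_scal_r, is_lim_seq_geom. rewrite Rabs_pos_eq; lra.
Qed.

Lemma qweight_norm_pos (a : R) (c : nat -> R) (n : nat) : r < 1 -> 0 < a -> c n <> 0 ->
  exists S, 0 < S /\
    is_series (fun j => qweight q r g j * (peval c n (q ^ j * a) * peval c n (q ^ j * a))) S.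
Proof.
  intros hr1 ha hc.
  set (y := peval c n).
  set (u := fun j => qweight q r g j * (y (q ^ j * a) * y (q ^ j * a))).
  destruct (qpoch_inf_spec g q hg hq) as [_ hD].
  destruct (continuity_ab_maj (fun x => y x * y x) 0 a ltac:(lra)) as [xM [hM _]].
  { intros x _. apply continuity_pt_mult; apply continuity_pt_peval. }
  set (M := y xM * y xM) in *.
  assert (hu : forall j, 0 <= u j <= M / qpoch_inf g q * r ^ j).
  { intros j.
    assert (0 < q ^ j <= 1) by (split; [apply pow_lt | apply pow_le_one]; lra).
    specialize (hM (q ^ j * a) ltac:(split; nra)). simpl in hM.
    pose proof (qweight_pos j). pose proof (qweight_le j).
    assert (0 <= y (q ^ j * a) * y (q ^ j * a)) by apply Rle_0_sqr.
    assert (0 < r ^ j / qpoch_inf g q) by (apply Rdiv_lt_0_compat; [apply pow_lt |]; lra).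
    unfold u. split; [nra|].
    replace (M / qpoch_inf g q * r ^ j) with (r ^ j / qpoch_inf g q * M) by (field; lra).
    apply Rmult_le_compat; lra. }
  assert (hex : ex_series u).
  { apply (ex_series_le u (fun j => M / qpoch_inf g q * r ^ j)).
    - intros j. change norm with Rabs. rewrite Rabs_pos_eq; apply hu.
    - apply (ex_series_scal_l (V := R_NormedModule)). exists (/ (1 - r)).
      apply is_series_geom. rewrite Rabs_pos_eq; lra. }
  exists (Series u). split; [|apply Series_correct, hex].
  destruct (not_all_ex_not _ (fun j => y (q ^ j * a) = 0)) as [j hj].
  { intros hall. apply hc. exact (peval_geom_zero q a n c hq ha hall n (le_n n)). }
  assert (0 < u j).
  { unfold u. apply Rmult_lt_0_compat; [apply qweight_pos | apply Rsqr_pos_lt, hj]. }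
  assert (u j <= sum_f_R0 u j).
  { destruct j as [|j]; simpl; [lra|].
    assert (0 <= sum_f_R0 u j) by (apply cond_pos_sum; intros; apply hu). lra. }
  assert (sum_f_R0 u j <= Series u).
  { apply sum_incr; [apply is_series_Reals, Series_correct, hex | intros; apply hu]. }
  lra.
Qed.

End Weight.

(** * The q-EHT operator and its polynomial eigenfunctions *)

Definition qEHT_op (q : R) (sigma tau y : R -> R) (x : R) : R :=
  sigma x * (((y x - y (q * x)) / ((1 - q) * x) - (y (/ q * x) - y x) / ((1 - q) * (/ q * x)))
             / ((1 - / q) * x))
  + tau x * ((y x - y (q * x)) / ((1 - q) * x)).

Lemma one_sub_inv_neq_0 (q : R) : 0 < q < 1 -> 1 - / q <> 0.
Proof.
  intros hq e. assert (/ q = 1) by lra.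
  assert (q = 1) by (rewrite <- (Rinv_inv q); rewrite H; apply Rinv_1). lra.
Qed.

Lemma qEHT_nonzero (q : R) (sigma tau y : R -> R) (lam x : R) : q <> 0 -> x <> 0 ->
  qEHT q sigma tau lam y x <-> qEHT_op q sigma tau y x + lam * y x = 0.
Proof.
  intros hq hx. unfold qEHT, qEHT_op, Dz.
  destruct (Req_EM_T x 0) as [e | _]; [contradiction|].
  destruct (Req_EM_T (/ q * x) 0) as [e | _].
  { apply Rmult_integral in e. destruct e as [e | e]; [|contradiction].
    destruct (Rinv_neq_0_compat q hq e). }
  replace (q * (/ q * x)) with x by (field; exact hq).
  reflexivity.
Qed.

Lemma qEHT_op_add_scal (q : R) (sigma tau f g : R -> R) (k x : R) :
  qEHT_op q sigma tau (fun t => f t + k * g t) x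
  = qEHT_op q sigma tau f x + k * qEHT_op q sigma tau g x.
Proof. unfold qEHT_op, Rdiv. ring. Qed.

Lemma qEHT_op_scal (q : R) (sigma tau g : R -> R) (k x : R) :
  qEHT_op q sigma tau (fun t => k * g t) x = k * qEHT_op q sigma tau g x.
Proof. unfold qEHT_op, Rdiv. ring. Qed.

Definition mu_n (q s1 t0 a1 : R) (k : nat) : R :=
  qnum q k * (t0 - s1 * a1 / 2 * qnum (/ q) (k - 1)).

Section Monomials.
Variables (q s1 t1 t0 a1 : R).
Hypothesis hq : 0 < q < 1.

Local Notation sigma1 := (fun x => s1 / 2 * x * (x - a1)).
Local Notation tau := (fun x => t1 * x + t0).

Lemma qEHT_op_pow (k : nat) (x : R) : x <> 0 ->
  qEHT_op q sigma1 tau (fun t => t ^ k) x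
  = - lambda_n q t1 s1 k * x ^ k + mu_n q s1 t0 a1 k * x ^ (k - 1).
Proof.
  intros hx. pose proof (one_sub_inv_neq_0 q hq).
  unfold qEHT_op, lambda_n, mu_n, qnum.
  destruct k as [|j]; [simpl; field; repeat split; try assumption; lra|].
  rewrite !Rpow_mult_distr, !pow_inv.
  replace (S j - 1)%nat with j by lia.
  assert (q ^ j <> 0) by (apply pow_nonzero; lra).
  assert (x ^ j <> 0) by (apply pow_nonzero; exact hx).
  simpl. field. repeat split; try assumption; lra.
Qed.

Lemma qEHT_op_peval (c : nat -> R) (lam x : R) (n : nat) : x <> 0 ->
  (forall k, (lam - lambda_n q t1 s1 k) * c k + mu_n q s1 t0 a1 (S k) * c (S k) = 0) ->
  qEHT_op q sigma1 tau (peval c n) x + lam * peval c n x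
  = - mu_n q s1 t0 a1 (S n) * c (S n) * x ^ n.
Proof.
  intros hx hrec. induction n as [|n IH].
  - change (peval c 0) with (fun t => c 0%nat * t ^ 0).
    rewrite qEHT_op_scal, qEHT_op_pow by exact hx.
    replace (mu_n q s1 t0 a1 0) with 0 by (unfold mu_n, qnum, Rdiv; simpl; ring).
    pose proof (hrec 0%nat). simpl. lra.
  - change (peval c (S n)) with (fun t => peval c n t + c (S n) * t ^ S n).
    rewrite qEHT_op_add_scal, qEHT_op_pow by exact hx.
    replace (S n - 1)%nat with n by lia.
    pose proof (hrec (S n)) as hS.
    transitivity (qEHT_op q sigma1 tau (peval c n) x + lam * peval c n x
      + c (S n) * (mu_n q s1 t0 a1 (S n) * x ^ n)
      + x ^ S n * ((lam - lambda_n q t1 s1 (S n)) * c (S n))); [ring|].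
    rewrite IH. replace ((lam - lambda_n q t1 s1 (S n)) * c (S n))
      with (- (mu_n q s1 t0 a1 (S (S n)) * c (S (S n)))) by lra.
    ring.
Qed.

End Monomials.

(* [1 + (1 - 1/q) t1 / (s1/2)] is q^2 Λ_q. *)
Lemma lambda_n_factor (q s1 t1 : R) (k : nat) : 0 < q < 1 -> s1 <> 0 ->
  lambda_n q t1 s1 k * (2 * (1 - q) ^ 2 * q ^ k)
  = (1 - q ^ k) * s1 * q * ((1 + (1 - / q) * t1 / (s1 / 2)) * q ^ k - q).
Proof.
  intros hq hs1. pose proof (one_sub_inv_neq_0 q hq).
  unfold lambda_n, qnum.
  destruct k as [|j]; [simpl; field; repeat split; try assumption; lra|].
  replace (S j - 1)%nat with j by lia. rewrite pow_inv.
  assert (q ^ j <> 0) by (apply pow_nonzero; lra).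
  simpl. field. repeat split; try assumption; lra.
Qed.

Lemma lambda_n_neq (q s1 t1 : R) (k n : nat) : 0 < q < 1 -> s1 <> 0 ->
  0 < 1 + (1 - / q) * t1 / (s1 / 2) < 1 -> (k < n)%nat ->
  lambda_n q t1 s1 n <> lambda_n q t1 s1 k.
Proof.
  intros hq hs1 hL hkn E.
  pose proof (lambda_n_factor q s1 t1 n hq hs1) as Fn.
  pose proof (lambda_n_factor q s1 t1 k hq hs1) as Fk.
  set (L := 1 + (1 - / q) * t1 / (s1 / 2)) in *.
  set (Qn := q ^ n) in *. set (Qk := q ^ k) in *.
  assert (Qn < Qk) by (apply pow_lt_pow_of_lt; assumption).
  assert (0 < Qn) by (apply pow_lt; lra).
  assert (Qk <= 1) by (apply pow_le_one; lra).
  assert (Qn <= q).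
  { unfold Qn. destruct n as [|n]; [lia|]. simpl.
    assert (q ^ n <= 1) by (apply pow_le_one; lra). nra. }
  (* Cross-multiplying the two factorisations leaves (Qk - Qn) (L Qn Qk - q) = 0. *)
  assert (key : s1 * q * (Qk - Qn) * (L * Qn * Qk - q) = 0).
  { transitivity (Qk * (lambda_n q t1 s1 n * (2 * (1 - q) ^ 2 * Qn))
                  - Qn * (lambda_n q t1 s1 k * (2 * (1 - q) ^ 2 * Qk))).
    - rewrite Fn, Fk. ring.
    - rewrite E. ring. }
  assert (L * Qn * Qk < q) by (assert (Qn * Qk <= q) by nra; nra).
  repeat (apply Rmult_integral in key; destruct key as [key | key]); lra.
Qed.

(* Downward recursion from the leading coefficient 1: entry i is the coefficient of x^(n-i). *)
Fixpoint coef_from_top (lam mu : nat -> R) (n i : nat) : R :=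
  match i with
  | O => 1
  | S i' => - mu (S (n - S i')) * coef_from_top lam mu n i' / (lam n - lam (n - S i')%nat)
  end.

Definition eigen_coef (lam mu : nat -> R) (n k : nat) : R :=
  if (k <=? n)%nat then coef_from_top lam mu n (n - k) else 0.

Lemma eigen_coef_top (lam mu : nat -> R) (n : nat) : eigen_coef lam mu n n = 1.
Proof. unfold eigen_coef. rewrite Nat.leb_refl, Nat.sub_diag. reflexivity. Qed.

Lemma eigen_coef_above (lam mu : nat -> R) (n k : nat) :
  (n < k)%nat -> eigen_coef lam mu n k = 0.
Proof. intros h. unfold eigen_coef. destruct (Nat.leb_spec k n); [lia | reflexivity]. Qed.

Lemma eigen_coef_rec (lam mu : nat -> R) (n : nat) :
  (forall k, (k < n)%nat -> lam n <> lam k) ->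
  forall k, (lam n - lam k) * eigen_coef lam mu n k + mu (S k) * eigen_coef lam mu n (S k) = 0.
Proof.
  intros hd k.
  destruct (Nat.lt_total k n) as [hlt | [-> | hgt]].
  - assert (lam n - lam k <> 0) by (intro; apply (hd k hlt); lra).
    unfold eigen_coef.
    destruct (Nat.leb_spec k n); [|lia]. destruct (Nat.leb_spec (S k) n); [|lia].
    replace (n - k)%nat with (S (n - S k)) by lia. simpl coef_from_top.
    replace (n - S (n - S k))%nat with k by lia.
    field. assumption.
  - rewrite eigen_coef_top, eigen_coef_above by lia. ring.
  - rewrite !eigen_coef_above by lia. ring.
Qed.

Lemma qEHT_eigenpoly (q : R) (sigma1 tau : R -> R) (s1 t1 t0 a1 : R) (n : nat) (x : R) :
  0 < q < 1 -> s1 <> 0 -> 0 < 1 + (1 - / q) * t1 / (s1 / 2) < 1 ->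
  (forall x, sigma1 x = s1 / 2 * x * (x - a1)) -> (forall x, tau x = t1 * x + t0) ->
  qEHT q sigma1 tau (lambda_n q t1 s1 n)
    (peval (eigen_coef (lambda_n q t1 s1) (mu_n q s1 t0 a1) n) n) x.
Proof.
  intros hq hs1 hL hsigma1 htau.
  set (c := eigen_coef (lambda_n q t1 s1) (mu_n q s1 t0 a1) n).
  assert (hrec : forall k, (lambda_n q t1 s1 n - lambda_n q t1 s1 k) * c k
                           + mu_n q s1 t0 a1 (S k) * c (S k) = 0).
  { apply eigen_coef_rec. intros k hk. apply lambda_n_neq; assumption. }
  assert (hc : c (S n) = 0) by (apply eigen_coef_above; lia).
  destruct (Req_EM_T x 0) as [-> | hx].
  - (* At x = 0 the equation reads t0 c_1 + λ_n c_0 = 0, the k = 0 case of the recursion. *)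
    unfold qEHT, Dz. destruct (Req_EM_T 0 0) as [_ | ne]; [|lra].
    rewrite hsigma1, htau, (is_derive_unique _ _ _ (is_derive_peval_0 c n hc)), peval_at_0.
    pose proof (hrec 0%nat) as h0.
    replace (lambda_n q t1 s1 0) with 0 in h0 by (unfold lambda_n, qnum; simpl; field; lra).
    replace (mu_n q s1 t0 a1 1) with t0 in h0 by (unfold mu_n, qnum; simpl; field; lra).
    lra.
  - apply qEHT_nonzero; [lra | exact hx |].
    assert (hs : qEHT_op q sigma1 tau (peval c n) x
                 = qEHT_op q (fun t => s1 / 2 * t * (t - a1)) (fun t => t1 * t + t0) (peval c n) x)
      by (unfold qEHT_op; rewrite hsigma1, htau; reflexivity).
    rewrite hs, qEHT_op_peval, hc by assumption. ring.
Qed.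

(** * Summation by parts and orthogonality *)

Definition qwronskian (q : R) (y z : R -> R) (x : R) : R :=
  (y x * z (q * x) - y (q * x) * z x) / ((1 - q) * x).

Lemma qwronskian_qdiff (q : R) (y z dy dz : R -> R) (x : R) : q <> 1 -> x <> 0 ->
  y x - y (q * x) = (1 - q) * x * dy x -> z x - z (q * x) = (1 - q) * x * dz x ->
  qwronskian q y z x = z x * dy x - y x * dz x.
Proof.
  intros hq hx hy hz. unfold qwronskian.
  replace (y (q * x)) with (y x - (1 - q) * x * dy x) by lra.
  replace (z (q * x)) with (z x - (1 - q) * x * dz x) by lra.
  field. split; [exact hx | lra].
Qed.

Lemma qEHT_op_wronskian (q : R) (sigma tau y z : R -> R) (x : R) : 0 < q < 1 -> x <> 0 ->
  qEHT_op q sigma tau y x * z x - y x * qEHT_op q sigma tau z x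
  = (sigma x / ((1 - / q) * x) + tau x) * qwronskian q y z x
    - sigma x / ((1 - / q) * x) * qwronskian q y z (/ q * x).
Proof.
  intros hq hx. pose proof (one_sub_inv_neq_0 q hq).
  unfold qEHT_op, qwronskian. replace (q * (/ q * x)) with x by (field; lra).
  field. repeat split; try assumption; lra.
Qed.

Section QGreen.
Variables (q a : R) (sigma tau : R -> R) (w : nat -> R).
Hypotheses (hq : 0 < q < 1) (ha : 0 < a) (hsigma_a : sigma a = 0)
  (hpearson : forall j,
     w (S j) * (sigma (q ^ S j * a) / ((1 - / q) * (q ^ S j * a)))
     = w j * (sigma (q ^ j * a) / ((1 - / q) * (q ^ j * a)) + tau (q ^ j * a))).

Lemma qgreen_sum (y z : R -> R) (ly lz : R) :
  (forall j, qEHT_op q sigma tau y (q ^ j * a) + ly * y (q ^ j * a) = 0) ->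
  (forall j, qEHT_op q sigma tau z (q ^ j * a) + lz * z (q ^ j * a) = 0) ->
  forall N, (lz - ly) * sum_f_R0 (fun j => w j * (y (q ^ j * a) * z (q ^ j * a))) N
    = w N * (sigma (q ^ N * a) / ((1 - / q) * (q ^ N * a)) + tau (q ^ N * a))
      * qwronskian q y z (q ^ N * a).
Proof.
  intros hy hz.
  set (G := fun j => w j * (sigma (q ^ j * a) / ((1 - / q) * (q ^ j * a)) + tau (q ^ j * a))
                     * qwronskian q y z (q ^ j * a)).
  assert (hx : forall j, q ^ j * a <> 0) by (intros j; assert (0 < q ^ j) by (apply pow_lt; lra); nra).
  assert (hterm : forall j, (lz - ly) * (w j * (y (q ^ j * a) * z (q ^ j * a)))
                  = G j - match j with O => 0 | S i => G i end).
  { intros j.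
    transitivity (w j * (qEHT_op q sigma tau y (q ^ j * a) * z (q ^ j * a)
                         - y (q ^ j * a) * qEHT_op q sigma tau z (q ^ j * a))).
    { specialize (hy j). specialize (hz j). nra. }
    rewrite qEHT_op_wronskian by auto. unfold G.
    destruct j as [|i].
    - replace (q ^ 0 * a) with a by (simpl; ring). rewrite hsigma_a. unfold Rdiv. ring.
    - replace (/ q * (q ^ S i * a)) with (q ^ i * a) by (simpl; field; lra).
      rewrite <- (hpearson i). ring. }
  induction N as [|N IH]; simpl sum_f_R0.
  - rewrite hterm. unfold G. ring.
  - rewrite Rmult_plus_distr_l, IH, hterm. unfold G. ring.
Qed.

End QGreen.

Lemma div_in_unit_interval (a b : R) : 0 < a < b -> 0 <= a / b < 1.
Proof.
  intros h. split; [apply Rdiv_le_0_compat; lra|].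
  apply (Rmult_lt_reg_r b); [lra|]. field_simplify; lra.
Qed.

Section Orthogonality.
Variables (q s1 s2 a1 a2 : R) (sigma1 tau : R -> R).
Hypotheses (hq : 0 < q < 1) (hs1 : s1 <> 0) (ha : 0 < a1 < a2)
  (hsigma1 : forall x, sigma1 x = s1 / 2 * x * (x - a1))
  (hsigma2 : forall x, q * (sigma1 x + (1 - / q) * x * tau x) = s2 / 2 * x * (x - a2))
  (hr : 0 < s2 * a2 / (q * s1 * a1) < 1).

Local Notation w := (qweight q (s2 * a2 / (q * s1 * a1)) (a1 / a2)).

Lemma sigma_tau_affine (x : R) : x <> 0 ->
  sigma1 x / ((1 - / q) * x) + tau x = s2 / 2 * (x - a2) / (q - 1).
Proof.
  intros hx. pose proof (one_sub_inv_neq_0 q hq).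
  apply (Rmult_eq_reg_l (q * (1 - / q) * x)).
  - transitivity (q * (sigma1 x + (1 - / q) * x * tau x)).
    + field. repeat split; try assumption; lra.
    + rewrite hsigma2. field. repeat split; try assumption; lra.
  - apply Rmult_integral_contrapositive; split; [|exact hx].
    apply Rmult_integral_contrapositive; split; [lra | assumption].
Qed.

Lemma qweight_pearson (j : nat) :
  w (S j) * (sigma1 (q ^ S j * a1) / ((1 - / q) * (q ^ S j * a1)))
  = w j * (sigma1 (q ^ j * a1) / ((1 - / q) * (q ^ j * a1)) + tau (q ^ j * a1)).
Proof.
  pose proof (one_sub_inv_neq_0 q hq).
  assert (0 < q ^ j) by (apply pow_lt; lra).
  assert (hx : q ^ j * a1 <> 0) by nra.
  assert (hx1 : q ^ S j * a1 <> 0) by (simpl; nra).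
  rewrite sigma_tau_affine, hsigma1 by exact hx.
  assert (hg : 0 <= a1 / a2 < 1) by (apply div_in_unit_interval; lra).
  assert (hsucc := qweight_succ q (s2 * a2 / (q * s1 * a1)) (a1 / a2) hq hg j).
  replace (w (S j) * (s1 / 2 * (q ^ S j * a1) * (q ^ S j * a1 - a1)
                      / ((1 - / q) * (q ^ S j * a1))))
    with (w (S j) * (1 - q ^ S j) * (- (q * s1 * a1) / (2 * (q - 1))))
    by (simpl; field; repeat split; try assumption; lra).
  rewrite hsucc. simpl. field. repeat split; lra.
Qed.

Lemma qweight_orthogonal (y z dy dz : R -> R) (ly lz : R) :
  (forall x, qEHT q sigma1 tau ly y x) -> (forall x, qEHT q sigma1 tau lz z x) ->
  (forall x, y x - y (q * x) = (1 - q) * x * dy x) ->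
  (forall x, z x - z (q * x) = (1 - q) * x * dz x) ->
  continuity_pt y 0 -> continuity_pt z 0 -> continuity_pt dy 0 -> continuity_pt dz 0 ->
  ly <> lz ->
  is_series (fun j => w j * (y (q ^ j * a1) * z (q ^ j * a1))) 0.
Proof.
  intros hy hz hdy hdz cy cz cdy cdz hl.
  assert (hg : 0 <= a1 / a2 < 1) by (apply div_in_unit_interval; lra).
  assert (hx : forall j, q ^ j * a1 <> 0) by (intros j; assert (0 < q ^ j) by (apply pow_lt; lra); nra).
  assert (hsol : forall (f : R -> R) l, (forall x, qEHT q sigma1 tau l f x) ->
                 forall j, qEHT_op q sigma1 tau f (q ^ j * a1) + l * f (q ^ j * a1) = 0).
  { intros f l hf j. apply qEHT_nonzero; [lra | apply hx | apply hf]. }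
  set (F := fun x => s2 / 2 * (x - a2) / (q - 1) * (z x * dy x - y x * dz x)).
  assert (hflux : forall N, w N * (sigma1 (q ^ N * a1) / ((1 - / q) * (q ^ N * a1)) + tau (q ^ N * a1))
                   * qwronskian q y z (q ^ N * a1) = w N * F (q ^ N * a1)).
  { intros N. rewrite sigma_tau_affine, (qwronskian_qdiff q y z dy dz) by (auto; lra).
    unfold F. ring. }
  assert (hF : is_lim_seq (fun N => F (q ^ N * a1)) (F 0)).
  { apply is_lim_seq_continuous.
    - unfold F. repeat first [apply continuity_pt_mult | apply continuity_pt_minus
        | apply continuity_pt_const; intros ? ? ; reflexivity | apply continuity_pt_id | assumption].
    - replace 0 with (0 * a1) by ring.
      apply (is_lim_seq_scal_r _ a1 0), is_lim_seq_geom. rewrite Rabs_pos_eq; lra. }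
  apply is_series_Reals.
  apply is_lim_seq_Reals.
  apply is_lim_seq_ext with
    (u := fun N => w N * F (q ^ N * a1) / (lz - ly)).
  - intros N. rewrite <- hflux, <- (qgreen_sum q a1 sigma1 tau w hq ltac:(lra)) with (ly := ly) (lz := lz).
    + field. lra.
    + rewrite hsigma1. ring.
    + exact qweight_pearson.
    + apply hsol, hy.
    + apply hsol, hz.
  - replace (Finite 0) with (Finite (0 * F 0 / (lz - ly))) by (f_equal; field; lra).
    apply is_lim_seq_div'; [|apply is_lim_seq_const | lra].
    apply is_lim_seq_mult'; [apply is_lim_seq_qweight; lra | exact hF].
Qed.

End Orthogonality.

Section Eigenpolynomials.
Variables (q s1 s2 t1 t0 a1 a2 : R) (sigma1 tau : R -> R).
Hypotheses (hq : 0 < q < 1) (hs1 : s1 <> 0) (ha : 0 < a1 < a2)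
  (hsigma1 : forall x, sigma1 x = s1 / 2 * x * (x - a1))
  (htau : forall x, tau x = t1 * x + t0)
  (hsigma2 : forall x, q * (sigma1 x + (1 - / q) * x * tau x) = s2 / 2 * x * (x - a2))
  (hLq : 0 < 1 + (1 - / q) * t1 / (s1 / 2) < 1)
  (hr : 0 < s2 * a2 / (q * s1 * a1) < 1).

Local Notation c n := (eigen_coef (lambda_n q t1 s1) (mu_n q s1 t0 a1) n).
Local Notation w := (qweight q (s2 * a2 / (q * s1 * a1)) (a1 / a2)).

Lemma eigenpoly_orthogonal (m n : nat) : m <> n ->
  is_series (fun j => w j * (peval (c n) n (q ^ j * a1) * peval (c m) m (q ^ j * a1))) 0.
Proof.
  intros hmn.
  apply (qweight_orthogonal q s1 s2 a1 a2 sigma1 tau hq hs1 ha hsigma1 hsigma2 hr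
           _ _ (peval (qdiff_coef q (c n)) n) (peval (qdiff_coef q (c m)) m)
           (lambda_n q t1 s1 n) (lambda_n q t1 s1 m));
    try (intros x; apply qEHT_eigenpoly; assumption);
    try (intros x; apply peval_qdiff; [lra | apply eigen_coef_above; lia]);
    try apply continuity_pt_peval.
  destruct (Nat.lt_total m n) as [h | [h | h]]; [| contradiction |].
  - apply lambda_n_neq; assumption.
  - apply not_eq_sym, lambda_n_neq; assumption.
Qed.

Lemma eigenpoly_norm_pos (n : nat) : exists S, 0 < S /\
  is_series (fun j => w j * (peval (c n) n (q ^ j * a1) * peval (c n) n (q ^ j * a1))) S.
Proof.
  apply qweight_norm_pos; try lra.
  - apply div_in_unit_interval, ha.
  - rewrite eigen_coef_top. lra.
Qed.

End Eigenpolynomials.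

(** * From the lattice sums to the complex q-integral *)

Lemma cexp_plus (z w : C) : cexp (Cplus z w) = Cmult (cexp z) (cexp w).
Proof.
  destruct z as [x y], w as [u v]. unfold cexp, Cplus, Cmult. simpl.
  rewrite exp_plus, cos_plus, sin_plus. f_equal; ring.
Qed.

Lemma cexp_neq_0 (z : C) : cexp z <> RtoC 0.
Proof.
  destruct z as [x y]. unfold cexp, RtoC. simpl. intros E. injection E as e1 e2.
  pose proof (exp_pos x). pose proof (sin2_cos2 y). unfold Rsqr in *.
  assert (cos y = 0) by (apply Rmult_integral in e1; destruct e1; lra).
  assert (sin y = 0) by (apply Rmult_integral in e2; destruct e2; lra).
  nra.
Qed.

Lemma cabspow_geom (q b K : R) (alpha : C) (j : nat) : 0 < q -> 0 < b ->
  cexp (Cmult alpha (RtoC (ln q))) = RtoC K ->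
  cabspow (q ^ j * b) alpha = Cmult (RtoC (K ^ j)) (cexp (Cmult alpha (RtoC (ln b)))).
Proof.
  intros hq hb hK. unfold cabspow.
  assert (0 < q ^ j) by (apply pow_lt; lra).
  rewrite Rabs_pos_eq, ln_mult, ln_pow by nra.
  clear H. induction j as [|j IH].
  - rewrite Rmult_0_l, Rplus_0_l. simpl. rewrite Cmult_1_l. reflexivity.
  - rewrite S_INR, Rmult_plus_distr_r, Rmult_1_l, (Rplus_comm _ (ln q)), Rplus_assoc.
    rewrite RtoC_plus, Cmult_plus_distr_l, cexp_plus, hK, IH, Cmult_assoc, <- RtoC_mult.
    reflexivity.
Qed.

Lemma is_series_RtoC (u : nat -> R) (S : R) :
  is_series u S -> is_series (fun j => RtoC (u j)) (RtoC S).
Proof.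
  intros h.
  assert (hsum : forall N, sum_n (fun j => RtoC (u j)) N = RtoC (sum_n u N)).
  { induction N as [|N IH]; [rewrite !sum_O; reflexivity|].
    rewrite !sum_Sn, IH. symmetry. apply RtoC_plus. }
  unfold is_series in *. apply filterlim_locally. intros eps.
  eapply filter_imp; [|exact (proj1 (filterlim_locally _ _) h eps)].
  intros N hN. rewrite hsum. split; simpl; [exact hN | apply ball_center].
Qed.

Lemma is_series_Cmult_RtoC (B : C) (u : nat -> R) (S : R) :
  is_series u S -> is_series (fun j => Cmult B (RtoC (u j))) (Cmult B (RtoC S)).
Proof. intros h. exact (is_series_scal B _ _ (is_series_RtoC u S h)). Qed.

(* On the lattice, |x|^α turns into |b|^α K^j, and K^j q^j is the geometric factor of qweight. *)
Lemma is_qint_rho (q b a2 K I : R) (alpha : C) (f : R -> R) :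
  0 < q < 1 -> 0 < b -> 0 < a2 -> cexp (Cmult alpha (RtoC (ln q))) = RtoC K ->
  is_series (fun j => qweight q (q * K) (b / a2) j * f (q ^ j * b)) I ->
  is_qint q b (fun x => Cmult (RtoC (f x)) (rho q b a2 alpha x))
    (Cmult (cexp (Cmult alpha (RtoC (ln b)))) (RtoC ((1 - q) * b * I))).
Proof.
  intros hq hb ha2 hK hI. unfold is_qint.
  apply (is_series_scal_l ((1 - q) * b)) in hI.
  apply (is_series_Cmult_RtoC (cexp (Cmult alpha (RtoC (ln b))))) in hI.
  eapply is_series_ext; [|exact hI]. intros j. simpl.
  unfold rho, qweight. rewrite (cabspow_geom q b K alpha j) by (lra || exact hK).
  replace (q * (q ^ j * b) / b) with (q ^ S j) by (simpl; field; lra).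
  replace (q ^ j * b / a2) with (q ^ j * (b / a2)) by (field; lra).
  destruct (cexp (Cmult alpha (RtoC (ln b)))) as [u v].
  unfold scal, Cmult, RtoC. simpl. unfold mult. simpl. rewrite Rpow_mult_distr. f_equal; ring.
Qed.

Lemma sigma2_linear_coef (q s1 s2 t1 t0 a1 a2 : R) (sigma1 tau : R -> R) : q <> 0 ->
  (forall x, sigma1 x = s1 / 2 * x * (x - a1)) -> (forall x, tau x = t1 * x + t0) ->
  (forall x, q * (sigma1 x + (1 - / q) * x * tau x) = s2 / 2 * x * (x - a2)) ->
  s2 * a2 = q * s1 * a1 - 2 * (q - 1) * t0.
Proof.
  intros hq hsigma1 htau hsigma2.
  pose proof (hsigma2 1) as h1. pose proof (hsigma2 (-1)) as h2.
  rewrite hsigma1, htau in h1, h2.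
  replace (s2 * a2) with (s2 / 2 * -1 * (-1 - a2) - s2 / 2 * 1 * (1 - a2)) by field.
  rewrite <- h1, <- h2. field. exact hq.
Qed.

Lemma q_y0_eq (q s1 s2 t1 t0 a1 a2 : R) (sigma1 tau : R -> R) :
  q <> 0 -> s1 <> 0 -> a1 <> 0 ->
  (forall x, sigma1 x = s1 / 2 * x * (x - a1)) -> (forall x, tau x = t1 * x + t0) ->
  (forall x, q * (sigma1 x + (1 - / q) * x * tau x) = s2 / 2 * x * (x - a2)) ->
  q * (/ q * (1 - (1 - / q) / a1 * (t0 / (s1 / 2)))) = s2 * a2 / (q * s1 * a1).
Proof.
  intros hq hs1 ha1 hsigma1 htau hsigma2.
  rewrite (sigma2_linear_coef q s1 s2 t1 t0 a1 a2 sigma1 tau) by assumption.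
  field. repeat split; assumption.
Qed.

Theorem theorem4p10 (q : R) (hq : 0 < q < 1)
  (sigma1 tau : R -> R) (s1 s2 t1 t0 a1 a2 : R)
  (ht : forall x, tau x = t1 * x + t0) (ht1 : t1 <> 0)
  (hs1 : s1 <> 0) (hs2 : s2 <> 0) (ha : 0 < a1 < a2)
  (hsigma1 : forall x, sigma1 x = s1 / 2 * x * (x - a1))
  (hsigma2 : forall x, q * (sigma1 x + (1 - / q) * x * tau x) = s2 / 2 * x * (x - a2))
  (hy0 : let y0 := / q * (1 - (1 - / q) / a1 * (t0 / (s1 / 2))) in 0 < q * y0 < 1)
  (hL : let Lq := / q ^ 2 * (1 + (1 - / q) * t1 / (s1 / 2)) in 0 < q ^ 2 * Lq < 1)
  (alpha : C)
  (halpha : cexp (Cmult alpha (RtoC (ln q))) = RtoC (/ q ^ 2 * s2 * a2 / (s1 * a1))) :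
  exists (c : nat -> nat -> R) (d : nat -> C),
    (forall n, c n n <> 0) /\
    (forall n x, qEHT q sigma1 tau (lambda_n q t1 s1 n) (peval (c n) n) x) /\
    (forall n, d n <> RtoC 0) /\
    (forall m n, is_qint q a1
        (fun x => Cmult (RtoC (peval (c n) n x * peval (c m) m x)) (rho q a1 a2 alpha x))
        (if Nat.eqb m n then d n else RtoC 0)).
Proof.
  assert (hLq : 0 < 1 + (1 - / q) * t1 / (s1 / 2) < 1).
  { cbv zeta in hL. rewrite <- Rmult_assoc, Rinv_r, Rmult_1_l in hL by (apply pow_nonzero; lra). exact hL. }
  assert (hr : 0 < s2 * a2 / (q * s1 * a1) < 1).
  { cbv zeta in hy0. rewrite (q_y0_eq q s1 s2 t1 t0 a1 a2 sigma1 tau) in hy0 by (auto; lra).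
    exact hy0. }
  assert (hK : q * (/ q ^ 2 * s2 * a2 / (s1 * a1)) = s2 * a2 / (q * s1 * a1)) by (field; lra).
  set (c := fun n => eigen_coef (lambda_n q t1 s1) (mu_n q s1 t0 a1) n).
  set (w := qweight q (s2 * a2 / (q * s1 * a1)) (a1 / a2)).
  set (norm2 := fun n => Series (fun j => w j * (peval (c n) n (q ^ j * a1) * peval (c n) n (q ^ j * a1)))).
  assert (hnorm : forall n, 0 < norm2 n /\
            is_series (fun j => w j * (peval (c n) n (q ^ j * a1) * peval (c n) n (q ^ j * a1))) (norm2 n)).
  { intros n. destruct (eigenpoly_norm_pos q s1 s2 t1 t0 a1 a2 hq ha hr n) as [S [hS hser]].
    replace (norm2 n) with S by (symmetry; apply is_series_unique, hser). split; assumption. }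
  exists c, (fun n => Cmult (cexp (Cmult alpha (RtoC (ln a1)))) (RtoC ((1 - q) * a1 * norm2 n))).
  split; [intros n; unfold c; rewrite eigen_coef_top; lra|].
  split; [intros n x; apply qEHT_eigenpoly; assumption|].
  split.
  { intros n. apply Cmult_neq_0; [apply cexp_neq_0 | intros E].
    apply RtoC_inj in E. destruct (hnorm n) as [hpos _].
    assert (0 < (1 - q) * a1) by nra. nra. }
  intros m n. destruct (Nat.eqb_spec m n) as [-> | hmn].
  - apply (is_qint_rho q a1 a2 (/ q ^ 2 * s2 * a2 / (s1 * a1))); try lra; [exact halpha|].
    rewrite hK. apply hnorm.
  - replace (RtoC 0) with (Cmult (cexp (Cmult alpha (RtoC (ln a1)))) (RtoC ((1 - q) * a1 * 0)))
      by (rewrite Rmult_0_r; apply Cmult_0_r).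
    apply (is_qint_rho q a1 a2 (/ q ^ 2 * s2 * a2 / (s1 * a1))); try lra; [exact halpha|].
    rewrite hK. apply (eigenpoly_orthogonal q s1 s2 t1 t0 a1 a2 sigma1 tau); assumption.
Qed.
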